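(* Let $G$ be a gradual mechanism implementing an SCF $f$ that has no SPL opportunity, and let $G'$ be obtained from $G$ through a COA or through an inverse ILL. Then $G'$ has no SPL opportunity.
   Context: Setting. $N$ finite set of agents, $X$ finite set of outcomes, finite type spaces $\Theta_i$; $\Theta=\prod_i\Theta_i$; an SCF is $f:\Theta\to X$. Dynamic game forms. A dynamic game form with perfect recall consists of a finite tree $\bar H$ of histories (finite sequences of action profiles) containing the empty initial history $\varnothing$, closed under prefixes ($\preceq$ prefix order, $\prec$ strict); terminal histories $Z$, non-terminal $H$; at each $h\in H$ a nonempty set $\mathbb P(h)$ of agents move simultaneously with available actions $A_i(h)$, all action profiles leading to successors; $\mathbb P(\varnothing)=N$; each agent's decision nodes $H_i$ are partitioned into information sets $\boldsymbol H_i$, with available actions constant on information sets ($A(\boldsymbol h_i)$) and perfect recall; $\mathcal X:Z\to X$. For information sets of $i$, $\boldsymbol h_i\preceq\bar{\boldsymbol h}_i$ if $h\preceq\bar h$ for some $h\in\boldsymbol h_i,\bar h\in\bar{\boldsymbol h}_i$; $\sigma_{a_i}(\boldsymbol h_i)$ is the set of immediate successor information sets of $i$ reached after $i$ chooses $a_i$ at $\boldsymbol h_i$; for a history $\bar h$, $\boldsymbol h_i\prec\bar h$ means $h\prec\bar h$ for some $h\in\boldsymbol h_i$. Gradual mechanisms. A GM implementing $f$ is such a game form in which (1) actions of $i$ are nonempty subsets of $\Theta_i$; (2) at every $h\in H_i$ the available actions of $i$ are pairwise disjoint with union $\Theta_i(h)$, where for any history $h$, $\Theta_i(h)$ is the last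 action of $i$ in $h$ ($\Theta_i$ if $i$ has not acted); (3) $\mathcal X(z)=f(\theta)$ for all $z\in Z$, $\theta\in\Theta(z)=\prod_i\Theta_i(z)$. $\Theta_{-i}(\boldsymbol h_i)=\bigcup_{h\in\boldsymbol h_i}\prod_{j\ne i}\Theta_j(h)$. SPL opportunity. A GM has an SPL opportunity if there exist an agent $i$, an information set $\boldsymbol h_i$ and $a_i\in A(\boldsymbol h_i)$ with $|a_i|\ge 2$ such that $\{z\in Z:\boldsymbol h_i\prec z,\ \Theta_i(z)=a_i\}\ne\varnothing$ (a splitting then appends, at each such $z$, a move of $i$ alone choosing between the two parts of a partition of $a_i$). Coalescing (COA). Given information sets $\boldsymbol h_i,\bar{\boldsymbol h}_i$ of $i$ and $a_i\in A(\boldsymbol h_i)$ with $\bar{\boldsymbol h}_i\in\sigma_{a_i}(\boldsymbol h_i)$ and $\Theta_{-i}(\boldsymbol h_i)=\Theta_{-i}(\bar{\boldsymbol h}_i)$: agent $i$'s move at $\bar{\boldsymbol h}_i$ is deleted and at $\boldsymbol h_i$ agent $i$ instead chooses from $(A(\boldsymbol h_i)\setminus\{a_i\})\cup A(\bar{\boldsymbol h}_i)$; every history through $\boldsymbol h_i$ with $i$ choosing $a_i$ is replaced by the corresponding histories in which $i$ chooses some $\bar a_i\in A(\bar{\boldsymbol h}_i)$ at $\boldsymbol h_i$ (if $\bar{\boldsymbol h}_i$ is reached, $\bar a_i$ is the action taken there; otherwise one copy per $\bar a_i$), with other agents' moves, information sets (except the deleted $\bar{\boldsymbol h}_i$) and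 outcomes carried over. Illuminating (ILL). Given an information set $\boldsymbol h_i$ and a partition $\{\boldsymbol h_i^1,\boldsymbol h_i^2\}$ of it into nonempty sets: keep histories, other agents' information sets and outcomes; replace every information set $\bar{\boldsymbol h}_i$ of $i$ with $\boldsymbol h_i\preceq\bar{\boldsymbol h}_i$ by the nonempty sets among $\bar{\boldsymbol h}_i^k=\{\bar h\in\bar{\boldsymbol h}_i:\exists h\in\boldsymbol h_i^k,\ h\preceq\bar h\}$, $k=1,2$. An inverse ILL transforms $G$ into $G'$ whenever an ILL transforms $G'$ into $G$. *)

From mathcomp Require Import all_boot.
Set Implicit Arguments. Unset Strict Implicit. Unset Printing Implicit Defensive.

(* Gradual mechanisms as dynamic game forms.
   - N : agents (finType); T i : type space of agent i (finType); X : outcomes.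
   - An action profile assigns to every agent either None (does not move) or
     Some a with a : {set T i} (in a GM actions are subsets of types).
   - A history is a finite sequence of action profiles.
   - A game form is given by the tree of histories (a predicate), for every
     agent i an information relation [same i] (an equivalence relation on
     the decision nodes of i whose classes are the information sets), and
     the outcome function (only its values on terminal histories matter). *)
Section GM.
Variables (N : finType) (T : N -> finType) (X : Type).

Definition prof := forall j : N, option {set T j}.
Definition hseq := seq prof.

Record gform := GForm {
  hist : hseq -> Prop;
  same : forall i : N, hseq -> hseq -> Prop;
  out  : hseq -> X }.

Definition prefix (p q : hseq) := exists t, q = p ++ t.
Definition sprefix (p q : hseq) := exists t, t <> [::] /\ q = p ++ t.

Definition terminal (G : gform) (z : hseq) :=
  hist G z /\ forall s, ~ hist G (rcons z s).

Definition dec (G : gform) (i : N) (h : hseq) :=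
  hist G h /\ exists s : prof, hist G (rcons h s) /\ s i <> None.

Definition avail (G : gform) (i : N) (h : hseq) (x : {set T i}) :=
  exists s : prof, hist G (rcons h s) /\ s i = Some x.
Arguments avail G i h x : clear implicits.

(* Theta_i(h): last action of i in h, Theta_i if i has not acted *)
Definition thlast (i : N) (h : hseq) : {set T i} :=
  foldl (fun acc (s : prof) => match s i with Some x => x | None => acc end)
        setT h.

(* i's experience along h: (decision prefix, action taken there) *)
Fixpoint decs (i : N) (pre h : hseq) : seq (hseq * {set T i}) :=
  match h with
  | [::] => [::]
  | s :: t => match s i with
              | Some x => (pre, x) :: decs i (rcons pre s) t
              | None => decs i (rcons pre s) t
              end
  end.

Definition tree_ok (G : gform) :=
  (* finite: bounded depth (branching is finite since profiles range over a
     finite type) *)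
  (exists n, forall h, hist G h -> size h <= n) /\
  hist G [::] /\
  (forall h t, hist G (h ++ t) -> hist G h).

Definition moves_ok (G : gform) :=
  (forall s : prof, hist G [:: s] -> forall j, s j <> None) /\
  (forall h (s : prof), hist G (rcons h s) -> exists j, s j <> None) /\
  (forall h (s s' : prof) j, hist G (rcons h s) -> hist G (rcons h s') ->
      (s j = None <-> s' j = None)) /\
  (forall h (s : prof), (exists s0, hist G (rcons h s0)) ->
      (forall j, exists s', hist G (rcons h s') /\ s' j = s j) ->
      hist G (rcons h s)).

Definition info_ok (G : gform) :=
  (forall i x y, same G i x y -> dec G i x /\ dec G i y) /\
  (forall i x, dec G i x -> same G i x x) /\
  (forall i x y, same G i x y -> same G i y x) /\
  (forall i x y z, same G i x y -> same G i y z -> same G i x z) /\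
  (forall i x y (a : {set T i}), same G i x y -> avail G i x a -> avail G i y a) /\
  (* perfect recall: same sequence of own information sets and actions *)
  (forall i x y, same G i x y ->
     size (decs i [::] x) = size (decs i [::] y) /\
     forall k, k < size (decs i [::] x) ->
       same G i (nth ([::], setT) (decs i [::] x) k).1
                (nth ([::], setT) (decs i [::] y) k).1 /\
       (nth ([::], setT) (decs i [::] x) k).2 =
       (nth ([::], setT) (decs i [::] y) k).2).

Definition is_game_form (G : gform) := tree_ok G /\ moves_ok G /\ info_ok G.

Definition is_GM (f : (forall j : N, T j) -> X) (G : gform) :=
  is_game_form G /\
  (forall h (s : prof) j x, hist G (rcons h s) -> s j = Some x -> x != set0) /\
  (forall i h, dec G i h ->
     (forall x y, avail G i h x -> avail G i h y -> x <> y -> [disjoint x & y]) /\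
     (forall t, t \in thlast i h <-> exists x, avail G i h x /\ t \in x)) /\
  (forall z, terminal G z ->
     forall theta : (forall j : N, T j), (forall j, theta j \in thlast j z) ->
       out G z = f theta).

Definition has_SPL (G : gform) :=
  exists (i : N) (h : hseq) (a : {set T i}) (z h' : hseq),
    dec G i h /\ avail G i h a /\ 1 < #|a| /\
    same G i h h' /\ terminal G z /\ sprefix h' z /\ thlast i z = a.

(* The information set of i is the class of h0; the partition {h^1, h^2}
   is h^1 = class /\ S, h^2 = class \ S. *)
Definition ILL (G G2 : gform) :=
  exists (i : N) (h0 : hseq) (S : hseq -> Prop),
    let part1 y := exists h, same G i h0 h /\ S h /\ prefix h y in
    let part2 y := exists h, same G i h0 h /\ ~ S h /\ prefix h y in
    let affected x := exists h h', same G i h0 h /\ same G i x h' /\ prefix h h' in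
    dec G i h0 /\
    (exists h, same G i h0 h /\ S h) /\ (exists h, same G i h0 h /\ ~ S h) /\
    (forall h, hist G2 h <-> hist G h) /\
    (forall z, terminal G z -> out G2 z = out G z) /\
    (forall j x y, j <> i -> (same G2 j x y <-> same G j x y)) /\
    (forall x y, same G2 i x y <->
       (same G i x y /\
        (affected x -> (part1 x /\ part1 y) \/ (part2 x /\ part2 y)))).

Definition inv_ILL (G G' : gform) := is_game_form G' /\ ILL G' G.

Definition imm_succ (G : gform) (i : N) (h0 : hseq) (a : {set T i}) (h1 : hseq) :=
  exists h hb (s : prof) t, same G i h0 h /\ same G i h1 hb /\
    hb = h ++ s :: t /\ s i = Some a /\
    (forall k, k < size t -> (nth s t k) i = None).
Arguments imm_succ G i h0 a h1 : clear implicits.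

(* theta (restricted to agents j <> i) belongs to Theta_{-i}(class of h0) *)
Definition thminus (G : gform) (i : N) (h0 : hseq) (theta : forall j : N, T j) :=
  exists h, same G i h0 h /\ forall j, j <> i -> theta j \in thlast j h.

(* [coa_path pre g g'] : g' is the history of the coalesced game that
   corresponds to the continuation g (after prefix pre) of a history of G,
   where b in A(class h1) is the action chosen at the class of h0 instead of a
   (if the class of h1 is reached, b must be the action taken there). *)
Unset Implicit Arguments.
Inductive coa_path (G : gform) (i : N) (h0 h1 : hseq) (a b : {set T i}) :
    hseq -> hseq -> hseq -> Prop :=
| coa_nil (pre : hseq) : coa_path G i h0 h1 a b pre [::] [::]
| coa_choose (pre : hseq) (s s' : prof) t t' :
    same G i h0 pre -> s i = Some a -> s' i = Some b ->
    (forall j, j <> i -> s' j = s j) ->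
    coa_path G i h0 h1 a b (rcons pre s) t t' ->
    coa_path G i h0 h1 a b pre (s :: t) (s' :: t')
| coa_drop (pre : hseq) (s : prof) t t' :
    same G i h1 pre -> s i = Some b -> (forall j, j <> i -> s j = None) ->
    coa_path G i h0 h1 a b (rcons pre s) t t' ->
    coa_path G i h0 h1 a b pre (s :: t) t'
| coa_delete (pre : hseq) (s s' : prof) t t' :
    same G i h1 pre -> s i = Some b -> (exists j, j <> i /\ s j <> None) ->
    s' i = None -> (forall j, j <> i -> s' j = s j) ->
    coa_path G i h0 h1 a b (rcons pre s) t t' ->
    coa_path G i h0 h1 a b pre (s :: t) (s' :: t')
| coa_keep (pre : hseq) (s : prof) t t' :
    ~ (same G i h0 pre /\ s i = Some a) -> ~ same G i h1 pre ->
    coa_path G i h0 h1 a b (rcons pre s) t t' ->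
    coa_path G i h0 h1 a b pre (s :: t) (s :: t').
Set Implicit Arguments.

Definition COA (G G' : gform) :=
  exists (i : N) (h0 h1 : hseq) (a : {set T i}),
    dec G i h0 /\ dec G i h1 /\ avail G i h0 a /\ imm_succ G i h0 a h1 /\
    (forall theta, thminus G i h0 theta <-> thminus G i h1 theta) /\
    (forall x', hist G' x' <->
       exists g b, hist G g /\ avail G i h1 b /\ coa_path G i h0 h1 a b [::] g x') /\
    (forall z b z', terminal G z -> avail G i h1 b ->
       coa_path G i h0 h1 a b [::] z z' -> out G' z' = out G z) /\
    (forall j x' y', same G' j x' y' <->
       exists x y b1 b2, hist G x /\ hist G y /\
         avail G i h1 b1 /\ avail G i h1 b2 /\
         coa_path G i h0 h1 a b1 [::] x x' /\ coa_path G i h0 h1 a b2 [::] y y' /\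
         same G j x y /\ (j = i -> ~ same G i h1 x)).

End GM.

(* Absence of an SPL opportunity is a property of terminal histories alone: in a
   gradual mechanism every agent moves at the root, so an agent k has a last
   move along every nonempty terminal history z, and that move offers an SPL
   opportunity exactly when the action taken there, which is Theta_k(z), has at
   least two types.  An (inverse) illumination leaves the tree untouched.  For a
   coalescing, every terminal history z' of G' is the image of a terminal
   history z of G (extend a preimage step by step: any extension of the
   preimage that is not absorbed by the coalescing would extend z').  Other
   agents' type sets agree along z and z'; for agent i, Theta_i(z') is either
   Theta_i(z) or the action b chosen at the deleted information set instead of
   a, and b is contained in a.  Hence |Theta_k(z')| <= |Theta_k(z)|. *)
From mathcomp Require Import all_boot.
From Stdlib Require Import Classical.
Set Implicit Arguments. Unset Strict Implicit. Unset Printing Implicit Defensive.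

Section Histories.
Variables (N : finType) (T : N -> finType).
Implicit Types (i : N) (g h p r : hseq T) (s : prof T).

Definition silent i r := all (fun s : prof T => s i == None) r.

Lemma silent_nth i s t : (forall k, k < size t -> (nth s t k) i = None) ->
  silent i t.
Proof. by move=> tsil; apply/(all_nthP s) => k /tsil /= ->. Qed.

Lemma thlast_rcons i h s :
  thlast i (rcons h s) = if s i is Some x then x else thlast i h.
Proof. by rewrite /thlast -cats1 foldl_cat. Qed.

Lemma thlast_cat_silent i h r : silent i r -> thlast i (h ++ r) = thlast i h.
Proof.
elim/last_ind: r => [|r s IH]; first by rewrite cats0.
rewrite /silent all_rcons => /andP[/eqP si sr].
by rewrite -rcons_cat thlast_rcons si IH.
Qed.

Lemma last_move i g : silent i g \/
  exists p s r, g = p ++ s :: r /\ s i = Some (thlast i g) /\ silent i r.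
Proof.
elim/last_ind: g => [|g s IH]; first by left.
case si: (s i) => [x|].
  by right; exists g, s, [::]; rewrite cats1 thlast_rcons si.
case: IH => [sg | [p [s0 [r [-> [s0i sr]]]]]].
  by left; rewrite /silent all_rcons si.
right; exists p, s0, (rcons r s).
by rewrite thlast_rcons si rcons_cat /silent all_rcons si.
Qed.

Lemma decs_cat i pre h t :
  decs i pre (h ++ t) = decs i pre h ++ decs i (pre ++ h) t.
Proof.
elim: h pre => [|s h IH] pre /=; first by rewrite cats0.
by case: (s i) => [x|]; rewrite IH cat_rcons.
Qed.

Lemma decs_silent i pre r : silent i r -> decs i pre r = [::].
Proof. by elim: r pre => //= s r IH pre /andP[/eqP -> /IH]. Qed.

Lemma decs_last_move i p s r x : s i = Some x -> silent i r ->
  decs i [::] (p ++ s :: r) = rcons (decs i [::] p) (p, x).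
Proof. by move=> si sr; rewrite decs_cat /= si (decs_silent _ sr) cats1. Qed.

End Histories.

Section TerminalCharacterisation.
Variables (N : finType) (T : N -> finType) (X : Type).
Implicit Types (G : gform T X) (z : hseq T).

Lemma has_SPL_terminal G : has_SPL G ->
  exists k z, terminal G z /\ z <> [::] /\ 1 < #|thlast k z|.
Proof.
case=> k [h [x [z [h' [_ [_ [big [_ [tz [[t [t0 Ez]] xz]]]]]]]]]].
exists k, z; do 2 split => //; last by rewrite xz.
by rewrite Ez; case: (h').
Qed.

(* Every agent moves at the root, so k has a last move along z; that move is
   the SPL opportunity. *)
Lemma has_SPL_of_terminal f G k z : is_GM f G -> terminal G z -> z <> [::] ->
  1 < #|thlast k z| -> has_SPL G.
Proof.
move=> [[[_ [_ hist_pre]] [[root_moves _] [_ [same_refl _]]]] _] tz.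
case: z tz => [|s0 r] tz // _ big.
have k_moves : s0 k <> None.
  by apply: root_moves; apply: (hist_pre [:: s0] r); exact: tz.1.
case: (last_move k (s0 :: r)) => [/andP[/eqP /k_moves] // | ].
case=> p [s [r' [Er [sk r'k]]]].
have ps_hist : hist G (rcons p s).
  by apply: (hist_pre _ r'); rewrite cat_rcons -Er; exact: tz.1.
have dec_p : dec G k p.
  split; first by apply: (hist_pre _ [:: s]); rewrite cats1.
  by exists s; rewrite sk.
exists k, p, (thlast k (s0 :: r)), (s0 :: r), p.
split=> //; split; first by exists s.
split=> //; split; first exact: same_refl.
by do 2 split => //; exists (s :: r').
Qed.

Lemma ILL_terminal G G2 z : ILL G G2 -> terminal G z -> terminal G2 z.
Proof.
case=> i [h0 [S [_ [_ [_ [hist_eq _]]]]]] [zh no_ext].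
by split=> [|s /hist_eq]; [exact/hist_eq | exact: no_ext].
Qed.

End TerminalCharacterisation.

Section Coalescing.
Variables (N : finType) (T : N -> finType) (X : Type).
Variables (G : gform T X) (i : N) (h0 h1 : hseq T) (a : {set T i}).
Implicit Types (g p r P : hseq T) (s : prof T).

Definition after_a P := exists p s r,
  P = p ++ s :: r /\ same G i h0 p /\ s i = Some a /\ silent i r.

Lemma after_a_nil : ~ after_a [::].
Proof. by case=> [[|? ?] [? [? []]]]. Qed.

Lemma after_a_rcons P s : after_a (rcons P s) ->
  if s i is Some x then same G i h0 P /\ x = a else after_a P.
Proof.
case=> p [s0 [r [E [h0p [s0a rsil]]]]].
case/lastP: r E rsil => [|r s1].
  by rewrite cats1 => /rcons_inj[-> ->] _; rewrite s0a.
rewrite -rcons_cons -rcons_cat => /rcons_inj[-> ->].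
rewrite /silent all_rcons => /andP[/eqP -> rsil].
by exists p, s0, r.
Qed.

(* Perfect recall: i's last own move along any history in the class of h1 is
   the one along hb, namely a in the class of h0. *)
Lemma imm_succ_after_a : info_ok G -> imm_succ G h0 a h1 ->
  forall x, same G i h1 x -> after_a x.
Proof.
move=> [_ [_ [same_sym [same_trans [_ recall]]]]].
case=> h [hb [s [t [h0h [h1hb [Ehb [si /silent_nth t_silent]]]]]]] x h1x.
subst hb.
have [size_eq same_nth] := recall _ _ _ (same_trans _ _ _ _ (same_sym _ _ _ h1x) h1hb).
rewrite (decs_last_move h si t_silent) in size_eq same_nth.
case: (last_move i x) => [x_silent | [q [s1 [r [Ex [s1i r_silent]]]]]].
  by move: size_eq; rewrite decs_silent // size_rcons.
subst x; rewrite (decs_last_move q s1i r_silent) !size_rcons in size_eq same_nth.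
move: size_eq same_nth => /eqP; rewrite eqSS => /eqP size_eq /(_ _ (ltnSn _)).
rewrite !nth_rcons ltnn eqxx size_eq ltnn eqxx /= => -[qh xa].
exists q, s1, r; split=> //; split; last by rewrite s1i xa.
exact: same_trans h0h (same_sym _ _ _ qh).
Qed.

Variable b : {set T i}.
Notation cp := (coa_path N T X G i h0 h1 a b).

Lemma coa_path_cat pre g g' u u' : cp pre g g' -> cp (pre ++ g) u u' ->
  cp pre (g ++ u) (g' ++ u').
Proof.
elim=> {pre g g'} [pre | pre s s' t t' ? ? ? ? _ IH | pre s t t' ? ? ? _ IH
  | pre s s' t t' ? ? ? ? ? _ IH | pre s t t' ? ? _ IH]; rewrite ?cats0 // => u_path.
- by apply: coa_choose => //; apply: IH; rewrite cat_rcons.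
- by apply: coa_drop => //; apply: IH; rewrite cat_rcons.
- by apply: coa_delete => //; apply: IH; rewrite cat_rcons.
- by apply: coa_keep => //; apply: IH; rewrite cat_rcons.
Qed.

Lemma thlast_coa_path_other k pre g g' : k <> i -> cp pre g g' ->
  forall pre', thlast k pre = thlast k pre' ->
  thlast k (pre ++ g) = thlast k (pre' ++ g').
Proof.
move=> ki; elim=> {pre g g'} [pre | pre s s' t t' _ _ _ s'k _ IH
  | pre s t t' _ _ sk _ IH | pre s s' t t' _ _ _ _ s'k _ IH
  | pre s t t' _ _ _ IH] pre' E; rewrite ?cats0 // -?cat_rcons.
all: by apply: IH; rewrite !thlast_rcons ?s'k ?sk // E.
Qed.

Hypothesis h1_after_a : forall x, same G i h1 x -> after_a x.

(* Where the G-history chose a at the class of h0, the G'-history chose b; the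
   second conjunct remembers this until the deleted information set is met. *)
Definition coa_related P P' :=
  (thlast i P' = thlast i P \/ (thlast i P = a /\ thlast i P' = b)) /\
  (after_a P -> thlast i P' = b).

Lemma coa_path_related pre g g' : cp pre g g' ->
  forall pre', coa_related pre pre' -> coa_related (pre ++ g) (pre' ++ g').
Proof.
elim=> {pre g g'} [pre | pre s s' t t' _ si s'i _ _ IH | pre s t t' h1pre si _ _ IH
  | pre s s' t t' h1pre si _ s'i _ _ IH | pre s t t' not_choose _ _ IH]
  pre' [rel_set rel_b]; rewrite ?cats0 // -?cat_rcons; apply: IH.
- by rewrite /coa_related !thlast_rcons si s'i; split; [right | ].
- by rewrite /coa_related !thlast_rcons si (rel_b (h1_after_a h1pre)); split=> //; left.
- by rewrite /coa_related !thlast_rcons si s'i (rel_b (h1_after_a h1pre)); split=> //; left.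
- rewrite /coa_related !thlast_rcons; case si: (s i) => [x|].
    split=> [|/after_a_rcons]; first by left.
    by rewrite si => -[h0pre xa]; case: not_choose; rewrite si xa.
  by split=> // /after_a_rcons; rewrite si; exact: rel_b.
Qed.

Lemma thlast_coa_path g g' : cp [::] g g' ->
  thlast i g' = thlast i g \/ (thlast i g = a /\ thlast i g' = b).
Proof.
move=> /coa_path_related /(_ [::]) [] //; split; first by left.
by move/after_a_nil.
Qed.

End Coalescing.

Section TerminalLifting.
Variables (N : finType) (T : N -> finType) (X : Type).
Variables (G G' : gform T X) (i : N) (h0 h1 : hseq T) (a b : {set T i}).
Notation cp := (coa_path N T X G i h0 h1 a).

Hypothesis depth_bound : exists n, forall h, hist G h -> size h <= n.
Hypothesis avail_same : forall x y (c : {set T i}),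
  same G i x y -> avail G x c -> avail G y c.
Hypothesis hist_coa : forall x', hist G' x' <->
  exists g c, hist G g /\ avail G h1 c /\ cp c [::] g x'.
Hypothesis avail_b : avail G h1 b.

(* Every successor of g either is absorbed by the coalescing or would extend
   the terminal history z'. *)
Lemma coa_path_extend g z' : terminal G' z' -> hist G g -> ~ terminal G g ->
  cp b [::] g z' -> exists s, hist G (rcons g s) /\ cp b [::] (rcons g s) z'.
Proof.
move=> [_ z'_max] g_hist g_open g_z'.
have extend s u' : cp b g [:: s] u' -> cp b [::] (rcons g s) (z' ++ u').
  by rewrite -cats1; exact: coa_path_cat g_z'.
have stuck s s' : hist G (rcons g s) -> ~ cp b g [:: s] [:: s'].
  move=> gs_hist /extend gs_z's; apply: (z'_max s'); apply/hist_coa.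
  by exists (rcons g s), b; rewrite cats1 in gs_z's.
case: (classic (same G i h1 g)) => [h1g | not_h1g].
  have [s [gs_hist si]] : avail G g b by exact: avail_same h1g avail_b.
  case: (classic (exists j, j <> i /\ s j <> None)) => [others | alone].
    case: (stuck s (@dfwith _ (fun j => option {set T j}) s i None) gs_hist).
    apply: coa_delete (coa_nil _ _ _ _ _ _ _ _ _ _) => //; first exact: dfwith_in.
    by move=> j /eqP; rewrite eq_sym; exact: dfwith_out.
  exists s; split=> //; rewrite -[z']cats0; apply: extend.
  apply: coa_drop (coa_nil _ _ _ _ _ _ _ _ _ _) => // j ji.
  by apply: NNPP => sj; apply: alone; exists j.
have [s gs_hist] : exists s, hist G (rcons g s).
  apply: NNPP => no_succ; apply: g_open; split=> // s gs_hist.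
  by apply: no_succ; exists s.
case: (classic (same G i h0 g /\ s i = Some a)) => [[h0g si] | not_choose].
  case: (stuck s (@dfwith _ (fun j => option {set T j}) s i (Some b)) gs_hist).
  apply: coa_choose (coa_nil _ _ _ _ _ _ _ _ _ _) => //; first exact: dfwith_in.
  by move=> j /eqP; rewrite eq_sym; exact: dfwith_out.
by case: (stuck s s gs_hist); apply: coa_keep (coa_nil _ _ _ _ _ _ _ _ _ _).
Qed.

Lemma coa_lift_terminal z' g : terminal G' z' -> hist G g -> cp b [::] g z' ->
  exists z, terminal G z /\ cp b [::] z z'.
Proof.
move=> z'_term; have [n depth] := depth_bound.
suff lift m : forall g, n <= size g + m -> hist G g -> cp b [::] g z' ->
    exists z, terminal G z /\ cp b [::] z z'.
  by apply: (lift n); rewrite leq_addl.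
elim: m => [|m IH] {}g bound g_hist g_z'.
  exists g; split=> //; split=> // s /depth.
  by rewrite size_rcons ltnNge -(addn0 (size g)) bound.
case: (classic (terminal G g)) => [g_term | g_open]; first by exists g.
have [s [gs_hist gs_z']] := coa_path_extend z'_term g_hist g_open g_z'.
by apply: (IH (rcons g s)) => //; rewrite size_rcons addSnnS.
Qed.

End TerminalLifting.

Section CoalescingTerminals.
Variables (N : finType) (T : N -> finType) (X : Type).

Lemma imm_succ_avail_sub f (G : gform T X) i h0 h1 (a b : {set T i}) :
  is_GM f G -> imm_succ G h0 a h1 -> avail G h1 b -> b \subset a.
Proof.
move=> [[_ [_ [same_dec [_ [_ [_ [avail_same _]]]]]]] [_ [partition _]]].
case=> h [hb [s [t [_ [h1hb [Ehb [si /silent_nth t_silent]]]]]]] h1b.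
have hb_a : thlast i hb = a.
  by rewrite Ehb -cat_rcons thlast_cat_silent // thlast_rcons si.
have [_ hb_dec] := same_dec _ _ _ h1hb.
apply/subsetP => x xb; rewrite -hb_a; apply/(partition i hb hb_dec).2.
by exists b; split=> //; exact: avail_same h1hb h1b.
Qed.

Lemma COA_terminal_card f (G G' : gform T X) k z' :
  is_GM f G -> COA G G' -> terminal G' z' -> z' <> [::] ->
  exists z, terminal G z /\ z <> [::] /\ #|thlast k z'| <= #|thlast k z|.
Proof.
move=> GM_G [i [h0 [h1 [a [_ [_ [_ [h1_succ [_ [hist_coa _]]]]]]]]]] z'_term z'_nil.
have [[[depth _] [_ info]] _] := GM_G.
have [_ [_ [_ [_ [avail_same _]]]]] := info.
have [g [b [g_hist [h1b g_z']]]] := (hist_coa z').1 z'_term.1.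
have [z [z_term z_z']] := coa_lift_terminal depth (avail_same i) hist_coa h1b
  z'_term g_hist g_z'.
exists z; split=> //; split.
  by move=> z_nil; subst z; inversion z_z'; subst; apply: z'_nil.
have [-> | ki] := eqVneq k i; last first.
  by rewrite (thlast_coa_path_other (elimN eqP ki) z_z' (erefl (thlast k [::]))).
have [-> // | [-> ->]] := thlast_coa_path (imm_succ_after_a info h1_succ) z_z'.
exact/subset_leq_card/(imm_succ_avail_sub GM_G h1_succ h1b).
Qed.

End CoalescingTerminals.

Theorem mainTheorem12 (N : finType) (T : N -> finType) (X : Type)
  (f : (forall i : N, T i) -> X) (G G' : gform T X) :
  is_GM f G -> ~ has_SPL G ->
  (COA G G' \/ inv_ILL G G') ->
  is_GM f G' ->
  ~ has_SPL G'.
Proof.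
(* Only the tree of G' matters. *)
move=> GM_G no_SPL G_to_G' _ /has_SPL_terminal [k [z' [z'_term [z'_nil big']]]].
have [z [z_term [z_nil le_card]]] :
    exists z, terminal G z /\ z <> [::] /\ #|thlast k z'| <= #|thlast k z|.
  case: G_to_G' => [coa | [_ ill]].
    exact: COA_terminal_card GM_G coa z'_term z'_nil.
  by exists z'; split; first exact: ILL_terminal ill z'_term.
by apply: no_SPL; apply: (has_SPL_of_terminal GM_G z_term z_nil); exact: leq_trans le_card.
Qed.
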